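(* Let $P$ be the set of ordered pairs $(x,y)$ of integers with $x\ge y\ge 0$. Let $Q$ be the set of quadruples $(v;r,s;\lambda)$ of integers satisfying $$\lambda(v-1)=r(r-1)+s(s-1),\qquad v=2n+1 \text{ where } n=r+s-\lambda,\qquad v/2\ge r\ge s\ge 0.$$ Then the map $P\to Q$ given by $$v=1+x(x+1)+y(y+1),\quad r=\binom{x+1}{2}+\binom{y}{2},\quad s=\binom{x}{2}+\binom{y+1}{2},\quad \lambda=\binom{x}{2}+\binom{y}{2}$$ is well defined (its values lie in $Q$) and is a bijection from $P$ onto $Q$.
   Context: $Q$ is the set of normalized feasible parameter sets of ''D-optimal'' supplementary difference sets with two base blocks. Binomial coefficients are the usual ones, with $\binom{k}{2}=k(k-1)/2$ (so $\binom{0}{2}=\binom{1}{2}=0$). *)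

From Stdlib Require Import ZArith Lia.
Open Scope Z_scope.

(* binom2 k = C(k,2) = k(k-1)/2 (exact division; binom2 0 = binom2 1 = 0). *)
Definition binom2 (k : Z) : Z := k * (k - 1) / 2.

Definition inP (p : Z * Z) : Prop :=
  let '(x, y) := p in x >= y /\ y >= 0.

Definition inQ (q : Z * Z * Z * Z) : Prop :=
  let '(v, r, s, l) := q in
  l * (v - 1) = r * (r - 1) + s * (s - 1) /\
  v = 2 * (r + s - l) + 1 /\
  2 * r <= v /\ r >= s /\ s >= 0.

Definition phi (p : Z * Z) : Z * Z * Z * Z :=
  let '(x, y) := p in
  (1 + x * (x + 1) + y * (y + 1),
   binom2 (x + 1) + binom2 y,
   binom2 x + binom2 (y + 1),
   binom2 x + binom2 y).

(** Substituting [r = λ + x], [s = λ + y] (so [n = λ + x + y] and [v = 2n + 1])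
    turns the quadratic condition [λ(v - 1) = r(r - 1) + s(s - 1)] into the
    linear one [2λ = x(x - 1) + y(y - 1)], i.e. [λ = C(x,2) + C(y,2)], while the
    inequalities [v/2 ≥ r ≥ s] become [x ≥ y ≥ 0].  Hence [Q] is parametrised by
    [P] through [(x, y) ↦ (λ + x, λ + y, λ)], which is exactly [phi]. *)

From Stdlib Require Import ZArith Lia.
Open Scope Z_scope.

Lemma binom2_double (k : Z) : 2 * binom2 k = k * (k - 1).
Proof.
  unfold binom2.
  assert (Heven : Z.even (k * (k - 1)) = true).
  { rewrite Z.even_mul, Z.even_sub.
    destruct (Z.even k); reflexivity. }
  apply Z.even_spec in Heven as [m Hm].
  rewrite Hm, (Z.mul_comm 2 m), Z.div_mul by lia.
  lia.
Qed.

Lemma binom2_succ (k : Z) : binom2 (k + 1) = binom2 k + k.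
Proof.
  pose proof (binom2_double (k + 1)) as H1; pose proof (binom2_double k) as H0.
  lia.
Qed.

Lemma binom2_nonneg (k : Z) : binom2 k >= 0.
Proof. pose proof (binom2_double k) as H; nia. Qed.

Lemma inQ_iff (v r s l : Z) :
  inQ (v, r, s, l) <->
  v = 2 * (r + s - l) + 1 /\
  2 * l = (r - l) * (r - l - 1) + (s - l) * (s - l - 1) /\
  r - l >= s - l /\ s - l >= 0 /\ s >= 0.
Proof.
  unfold inQ; split.
  - intros (Hdiop & -> & Hv & Hrs & Hs).
    repeat split; nia.
  - intros (-> & Hl & Hrs & Hsl & Hs).
    repeat split; nia.
Qed.

Lemma phi_eq (x y : Z) :
  phi (x, y) =
  (2 * (binom2 x + binom2 y + x + y) + 1,
   binom2 x + binom2 y + x, binom2 x + binom2 y + y, binom2 x + binom2 y).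
Proof.
  unfold phi; rewrite !binom2_succ.
  pose proof (binom2_double x) as Hx; pose proof (binom2_double y) as Hy.
  rewrite !pair_equal_spec; repeat split; lia.
Qed.

Theorem proposition1 :
  (forall p, inP p -> inQ (phi p)) /\
  (forall p1 p2, inP p1 -> inP p2 -> phi p1 = phi p2 -> p1 = p2) /\
  (forall q, inQ q -> exists p, inP p /\ phi p = q).
Proof.
  split; [|split].
  - intros [x y] [Hxy Hy].
    rewrite phi_eq, inQ_iff.
    pose proof (binom2_double x) as Hx2; pose proof (binom2_double y) as Hy2.
    pose proof (binom2_nonneg x) as Hnn; pose proof (binom2_nonneg y) as Hnn'.
    repeat split; lia.
  - intros [x1 y1] [x2 y2] _ _ Heq.
    rewrite !phi_eq in Heq; injection Heq as _ Hr Hs Hl.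
    f_equal; lia.
  - intros [[[v r] s] l] HQ.
    apply inQ_iff in HQ as (-> & Hl & Hrs & Hsl & Hs).
    exists (r - l, s - l); split.
    + unfold inP; lia.
    + assert (Hl' : binom2 (r - l) + binom2 (s - l) = l).
      { pose proof (binom2_double (r - l)) as Hx.
        pose proof (binom2_double (s - l)) as Hy.
        lia. }
      rewrite phi_eq, Hl', !pair_equal_spec; repeat split; ring.
Qed.
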